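(* Let $q$ be a prime power, and let $m$ and $j$ be positive integers with $m>1$, $1\le j\le m-1$ and $\gcd(j,q-1)=1$. Let $\lambda_j(x)=\sum_{0\le i_1<i_2<\cdots<i_j\le m-1}x^{q^{i_1}+\cdots+q^{i_j}}$ and let $h(x)\in\mathbf{F}_q[x]$. Then $x\,h(\lambda_j(x))$ is a permutation polynomial of $\mathbf{F}_{q^m}$ if and only if $h(0)\ne 0$ and $x\,h(x)^j$ permutes $\mathbf{F}_q$.
   Context: $\lambda_j(x)$ is the $j$-th elementary symmetric polynomial $\sigma_j$ evaluated at $x,x^q,\ldots,x^{q^{m-1}}$; it lies in $\mathbf{F}_q[x]$ and takes values in $\mathbf{F}_q$ on $\mathbf{F}_{q^m}$. A permutation polynomial of a finite field $K$ is a polynomial inducing a bijection $K\to K$. *)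

From HB Require Import structures.
From mathcomp Require Import all_boot all_order all_algebra all_field.
Set Implicit Arguments. Unset Strict Implicit. Unset Printing Implicit Defensive.
Import GRing.Theory.
Local Open Scope ring_scope.

Definition lambda_poly (F : finFieldType) (m j : nat) : {poly F} :=
  \sum_(S : {set 'I_m} | #|S| == j) 'X^(\sum_(i in S) #|F| ^ (val i))%N.

Definition is_perm_poly (F L : fieldType) (iota : {rmorphism F -> L}) (p : {poly F}) : Prop :=
  bijective (fun x : L => (map_poly iota p).[x]).

From HB Require Import structures.
From mathcomp Require Import all_boot all_order all_algebra all_field all_fingroup all_solvable.
From mathcomp Require Import zify.
Set Implicit Arguments. Unset Strict Implicit. Unset Printing Implicit Defensive.
Import GRing.Theory.

(* Write q = #|F| and T = 1 + q + ... + q^(m-1), so that q^m - 1 = (q - 1) T.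
   For x in F_{q^m}, lambda_j(x) is fixed by the Frobenius x |-> x^q (which
   permutes the j-subsets of {0,...,m-1} cyclically), so lambda_j maps F_{q^m}
   to F_q; it satisfies lambda_j(c x) = c^j lambda_j(x) for c in F_q, whence
   f(x) = x h(lambda_j(x)) and g(c) = c h(c)^j satisfy lambda_j o f = g o lambda_j.
   The exponents of lambda_j are distinct and all below T, so lambda_j is a
   nonzero polynomial of degree < T.  Since T < q^m, lambda_j is not identically
   zero on F_{q^m}, and as x |-> x^j is onto F_q, lambda_j is onto F_q.  Its
   nonzero fibres have fewer than T points, so they cover at most
   (q - 1)(T - 1) < q^m - 1 points and lambda_j has a nonzero root x1.
   If f permutes F_{q^m} then f(x1) = x1 h(0) forces h(0) != 0, and g is onto,
   hence bijective.  Conversely, if g is injective then h has no root in F_q,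
   and f(x) = f(y) gives lambda_j(x) = lambda_j(y), hence x = y. *)

Lemma base_digit q m (b : nat -> nat) k : 1 < q -> (forall i, b i < q) -> k < m ->
  (\sum_(i < m) b i * q ^ i) %/ q ^ k %% q = b k.
Proof.
move=> q_gt1 b_lt_q; elim: k m b b_lt_q => [|k IHk] [|m] b b_lt_q // k_lt_m.
  rewrite big_ord_recl /= expn0 divn1 muln1.
  under eq_bigr do rewrite expnS mulnCA.
  by rewrite -big_distrr /= addnC mulnC modnMDl modn_small.
rewrite big_ord_recl /= expn0 muln1.
under eq_bigr do rewrite expnS mulnCA.
rewrite -big_distrr /= expnS divnMA addnC mulnC divnMDl ?(ltnW q_gt1) //.
by rewrite (divn_small (b_lt_q 0)) addn0; apply: (IHk m (fun i => b i.+1)).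
Qed.

Definition set_weight q m (S : {set 'I_m}) : nat := \sum_(i in S) q ^ i.

Lemma set_weightE q m (S : {set 'I_m}) : set_weight q S = \sum_(i < m) (i \in S) * q ^ i.
Proof.
by rewrite /set_weight big_mkcond; apply: eq_bigr => i _; case: (i \in S); rewrite ?mul1n.
Qed.

Lemma set_weight_inj q m : 1 < q -> injective (@set_weight q m).
Proof.
move=> q_gt1 S1 S2 eqS; apply/setP => k.
pose b (S : {set 'I_m}) (i : nat) : nat := i \in map val (enum S).
have bE S (i : 'I_m) : b S i = (i \in S) by rewrite /b mem_map ?mem_enum //; apply: val_inj.
have b_lt_q S i : b S i < q by rewrite /b; case: (_ \in _); rewrite // ltnW.
have weightE S : set_weight q S = \sum_(i < m) b S i * q ^ i.
  by rewrite set_weightE; apply: eq_bigr => i _; rewrite bE.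
have := base_digit q_gt1 (b_lt_q S1) (ltn_ord k).
rewrite -weightE eqS weightE base_digit // !bE.
by case: (k \in S1); case: (k \in S2).
Qed.

Lemma set_weight_gt0 q m (S : {set 'I_m}) : 0 < q -> S != set0 -> 0 < set_weight q S.
Proof.
move=> q_gt0 /set0Pn[k kS]; rewrite /set_weight (bigD1 k) //=.
by rewrite addn_gt0 expn_gt0 q_gt0.
Qed.

Lemma set_weight_lt q m (S : {set 'I_m}) :
  0 < q -> #|S| < m -> set_weight q S < \sum_(i < m) q ^ i.
Proof.
move=> q_gt0 S_lt_m.
have /card_gt0P[k] : 0 < #|~: S| by have := cardsC S; rewrite card_ord; lia.
rewrite inE => kS; rewrite set_weightE [X in _ < X](bigD1 k) //= (bigD1 k) //=.
rewrite (negbTE kS) mul0n add0n addnC -addn1 leq_add ?expn_gt0 ?q_gt0 //.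
by apply: leq_sum => i _; case: (i \in S); rewrite ?mul1n.
Qed.

Local Open Scope ring_scope.

Lemma card_pnat (R : finNzRingType) p : p \in [pchar R] -> p.-nat #|R|.
Proof.
by move=> pR; have := abelem_pgroup (fin_ring_pchar_abelem pR); rewrite /pgroup cardsT.
Qed.

Lemma expr_cardD (F L : finFieldType) (iota : {rmorphism F -> L}) (x y : L) :
  (x + y) ^+ #|F| = x ^+ #|F| + y ^+ #|F|.
Proof.
have [p _ pF] := finPcharP F.
have pL : p \in [pchar L] by rewrite (fmorph_pchar iota).
by apply: exprDn_pchar; rewrite (eq_pnat _ (pcharf_eq pL)) card_pnat.
Qed.

Lemma expf_card_exp (F : finFieldType) (c : F) i : c ^+ (#|F| ^ i) = c.
Proof. by elim: i => [|i IHi]; rewrite ?expr1 // expnSr exprM IHi expf_card. Qed.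

Lemma expr_card_fixed_image (F L : finFieldType) (iota : {rmorphism F -> L}) (y : L) :
  y ^+ #|F| = y -> exists c, iota c = y.
Proof.
move=> yq; have [c /eqP <-|not_img] := pickP (fun c => iota c == y); first by exists c.
pose p : {poly L} := 'X^#|F| - 'X.
have size_p : size p = #|F|.+1.
  by rewrite size_polyDl ?size_polyXn // size_polyN size_polyX ltnS finNzRing_gt1.
have p_neq0 : p != 0 by rewrite -size_poly_gt0 size_p.
have roots_p : all (root p) (y :: map iota (enum F)).
  apply/allP => z; rewrite inE => /orP[/eqP ->|/mapP[c _ ->]].
    by rewrite /root !hornerE yq subrr.
  by rewrite /root !hornerE -rmorphXn expf_card subrr.
have uniq_rs : uniq (y :: map iota (enum F)).
  rewrite /= map_inj_uniq ?enum_uniq ?andbT; last exact: fmorph_inj.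
  by apply/mapP => -[c _ yc]; have := not_img c; rewrite yc eqxx.
have := max_poly_roots p_neq0 roots_p uniq_rs.
by rewrite size_p /= size_map -cardE ltnn.
Qed.

Lemma expf_coprime_surj (F : finFieldType) j :
  (0 < j)%N -> coprime j #|F|.-1 -> forall c : F, exists d, d ^+ j = c.
Proof.
move=> j_gt0 coprime_j c; have [u v Bezout _] := egcdnP #|F|.-1 j_gt0.
exists (c ^+ u); rewrite -exprM Bezout (eqP coprime_j); elim: v {Bezout} => [|v IHv].
  by rewrite mul0n add0n expr1.
rewrite mulSn -addnA exprD IHv -exprSr prednK ?expf_card //.
by apply/card_gt0P; exists 0.
Qed.

Lemma surjF_bij (T : finType) (f : T -> T) : (forall y, exists x, f x = y) -> bijective f.
Proof.
move=> f_surj; have f_surjb y : exists x, f x == y by have [x <-] := f_surj y; exists x.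
have [s sK] : {s | cancel s f}.
  by exists (fun y => xchoose (f_surjb y)) => y; apply/eqP/(xchooseP (f_surjb y)).
exact (bij_can_bij (injF_bij (can_inj sK)) sK).
Qed.

Section Lambda.

Variables (F L : finFieldType) (iota : {rmorphism F -> L}) (m j : nat).

Local Notation q := #|F|.
Local Notation T := (\sum_(i < m) q ^ i)%N.
Local Notation lam := (map_poly iota (lambda_poly F m j)).

Let q_gt0 : (0 < q)%N. Proof. by apply/card_gt0P; exists 0. Qed.

Lemma map_lambda_polyE : lam = \sum_(S : {set 'I_m} | #|S| == j) 'X^(set_weight q S).
Proof. by rewrite rmorph_sum; apply: eq_bigr => S _; apply: map_polyXn. Qed.

Lemma horner_lambda x :
  lam.[x] = \sum_(S : {set 'I_m} | #|S| == j) \prod_(i in S) x ^+ (q ^ i).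
Proof.
rewrite map_lambda_polyE horner_sum; apply: eq_bigr => S _.
by rewrite hornerXn (big_morph (fun n => x ^+ n) (exprD x) (expr0 x)).
Qed.

Lemma horner_lambdaZ c x : lam.[iota c * x] = iota (c ^+ j) * lam.[x].
Proof.
rewrite !horner_lambda mulr_sumr; apply: eq_bigr => S /eqP cardS.
under eq_bigr do rewrite exprMn -rmorphXn expf_card_exp.
by rewrite big_split /= prodr_const cardS rmorphXn.
Qed.

Lemma size_lambda : (j < m)%N -> (size lam <= T)%N.
Proof.
move=> j_lt_m; apply/leq_sizeP => k T_le_k; rewrite map_lambda_polyE coef_sum.
rewrite big1 // => S /eqP cardS; rewrite coefXn.
case: eqP => // k_eq; have S_lt_m : (#|S| < m)%N by rewrite cardS.
by have := set_weight_lt q_gt0 S_lt_m; rewrite -k_eq ltnNge T_le_k.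
Qed.

Lemma lambda_neq0 : (j <= m)%N -> lam != 0.
Proof.
move=> j_le_m; pose S0 : {set 'I_m} := widen_ord j_le_m @: [set: 'I_j].
have cardS0 : #|S0| = j.
  by rewrite card_imset ?cardsT ?card_ord // => a b [/val_inj].
apply/eqP => /(congr1 (fun p : {poly L} => p`_(set_weight q S0))).
rewrite coef0 map_lambda_polyE coef_sum (bigD1 S0) ?cardS0 //= coefXn eqxx.
rewrite big1 ?addr0; first by move/eqP; rewrite oner_eq0.
move=> S /andP[_ S_neq_S0]; rewrite coefXn; case: eqP => // eqS.
by move: S_neq_S0; rewrite (set_weight_inj (finNzRing_gt1 F) eqS) eqxx.
Qed.

Lemma horner_lambda0 : (0 < j)%N -> lam.[0] = 0.
Proof.
move=> j_gt0; rewrite map_lambda_polyE horner_sum big1 // => S /eqP cardS.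
rewrite hornerXn expr0n eqn0Ngt set_weight_gt0 //.
by rewrite -card_gt0 cardS.
Qed.

Hypothesis card_L : #|L| = (q ^ m)%N.

Lemma horner_lambda_frobenius x : lam.[x] ^+ q = lam.[x].
Proof.
have zero_q : (0 : L) ^+ q = 0 by rewrite expr0n eqn0Ngt q_gt0.
rewrite horner_lambda (big_morph (fun y : L => y ^+ q) (expr_cardD iota) zero_q).
have shift (S : {set 'I_m}) : (\prod_(i in S) x ^+ (q ^ i)) ^+ q =
    \prod_(i in @ordS m @: S) x ^+ (q ^ i).
  rewrite big_imset /=; last by move=> a b _ _; apply: ordS_inj.
  rewrite -prodrXl; apply: eq_bigr => i _; rewrite -exprM -expnSr /=.
  have := ltn_ord i; rewrite leq_eqVlt => /orP[/eqP ->|i_lt]; last by rewrite modn_small.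
  by rewrite modnn expn0 expr1 -card_L expf_card.
under eq_bigr do rewrite shift.
rewrite [RHS](reindex_inj (imset_inj (@ordS_inj m))) /=.
by apply: eq_bigl => S; rewrite card_imset //; apply: ordS_inj.
Qed.

Definition lambdaF (x : L) : F := odflt 0 [pick c | iota c == lam.[x]].

Lemma lambdaFE x : iota (lambdaF x) = lam.[x].
Proof.
rewrite /lambdaF; case: pickP => [c /eqP //|not_img] /=.
have [c img_c] := expr_card_fixed_image iota (horner_lambda_frobenius x).
by have := not_img c; rewrite img_c eqxx.
Qed.

Lemma lambdaFZ c x : lambdaF (iota c * x) = c ^+ j * lambdaF x.
Proof. by apply: (fmorph_inj iota); rewrite rmorphM !lambdaFE horner_lambdaZ. Qed.

Hypotheses (j_gt0 : (0 < j)%N) (j_lt_m : (j < m)%N).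

Lemma lambdaF0 : lambdaF 0 = 0.
Proof. by apply: (fmorph_inj iota); rewrite lambdaFE horner_lambda0 ?rmorph0. Qed.

Let T_gt0 : (0 < T)%N.
Proof. by case: m j_lt_m => // n _; rewrite big_ord_recl expn0. Qed.

Let card_L_geom : #|L| = (q.-1 * T).+1.
Proof. by rewrite card_L -predn_exp prednK // expn_gt0 q_gt0. Qed.

Let q_pred_gt0 : (0 < q.-1)%N.
Proof. by rewrite -ltnS prednK // finNzRing_gt1. Qed.

Lemma card_lambda_fiber y : y != 0 -> (#|[set x | lam.[x] == y]| < T)%N.
Proof.
move=> y_neq0; pose p := lam - y%:P.
have hornerp x : p.[x] = lam.[x] - y by rewrite !hornerE.
have p_neq0 : p != 0.
  apply: contraNneq y_neq0 => p_eq0; move: (hornerp 0).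
  by rewrite p_eq0 horner0 horner_lambda0 // sub0r => /eqP; rewrite eq_sym oppr_eq0.
have size_p : (size p <= T)%N.
  rewrite (leq_trans (size_polyD _ _)) // geq_max size_lambda // size_polyN.
  exact: leq_trans (size_polyC_leq1 _) T_gt0.
apply: leq_trans size_p; rewrite cardE max_poly_roots ?enum_uniq //.
by apply/allP => x; rewrite mem_enum inE /root hornerp subr_eq0.
Qed.

Lemma exists_lambdaF_neq0 : exists x, lambdaF x != 0.
Proof.
have [x x_neq0|lambdaF_eq0] := pickP (fun x => lambdaF x != 0); first by exists x.
have roots_lam : all (root lam) (enum L).
  apply/allP => x _; have /negbFE/eqP := lambdaF_eq0 x.
  by rewrite /root -lambdaFE => ->; rewrite rmorph0.
have := max_poly_roots (lambda_neq0 (ltnW j_lt_m)) roots_lam (enum_uniq L).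
rewrite -cardE card_L_geom => /leq_trans/(_ (size_lambda j_lt_m)).
by rewrite ltnNge leqW ?leq_pmull.
Qed.

Hypothesis coprime_j : coprime j q.-1.

Lemma lambdaF_surj c : exists x, lambdaF x = c.
Proof.
have [x0 x0_neq0] := exists_lambdaF_neq0.
have [d dj] := expf_coprime_surj j_gt0 coprime_j (c / lambdaF x0).
by exists (iota d * x0); rewrite lambdaFZ dj divfK.
Qed.

Lemma exists_lambda_root_neq0 : exists2 x, x != 0 & lambdaF x = 0.
Proof.
have [x /andP[x_neq0 /eqP x_root]|no_root] :=
  pickP (fun x => (x != 0) && (lambdaF x == 0)); first by exists x.
have partition : #|L| = (\sum_(c : F) #|[set x | lambdaF x == c]|)%N.
  rewrite -sum1_card (partition_big lambdaF predT) //=.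
  by apply: eq_bigr => c _; rewrite sum1dep_card; apply: eq_card => x; rewrite !inE.
have fiber0 : (#|[set x | lambdaF x == 0%R]| <= 1)%N.
  rewrite -(cards1 (0 : L)); apply/subset_leq_card/subsetP => x.
  by rewrite !inE => x_root; have := no_root x; rewrite x_root andbT => /negbFE.
have fiber c : c != 0 -> (#|[set x | lambdaF x == c]| < T)%N.
  move=> c_neq0; rewrite (@eq_card _ _ [set x | lam.[x] == iota c]).
    by rewrite card_lambda_fiber ?fmorph_eq0.
  by move=> x; rewrite !inE -lambdaFE (inj_eq (fmorph_inj iota)).
have fibers : (\sum_(c | c != 0%R) #|[set x | lambdaF x == c]| <= q.-1 * T.-1)%N.
  rewrite -(cardC1 (0 : F)) -sum_nat_const; apply: leq_sum => c c_neq0.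
  by rewrite -ltnS prednK ?fiber.
move: partition; rewrite (bigD1 0) //= card_L_geom => partition.
have := leq_add fiber0 fibers; rewrite -partition.
by rewrite -{1}(prednK T_gt0) mulnS ltn_add2r ltnNge q_pred_gt0.
Qed.

End Lambda.

Section PermutationPolynomial.

Variables (F L : finFieldType) (iota : {rmorphism F -> L}) (m j : nat) (h : {poly F}).

Local Notation f := (fun x : L => (map_poly iota ('X * (h \Po lambda_poly F m j))).[x]).
Local Notation g := (fun c : F => c * h.[c] ^+ j).

Hypothesis card_L : #|L| = (#|F| ^ m)%N.

Lemma horner_perm_poly x : f x = x * iota h.[lambdaF iota m j x].
Proof.
rewrite rmorphM /= map_polyX map_comp_poly hornerM hornerX horner_comp.
by rewrite -(lambdaFE iota _ card_L) horner_map.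
Qed.

Lemma lambdaF_perm_poly x : lambdaF iota m j (f x) = g (lambdaF iota m j x).
Proof. by rewrite /= horner_perm_poly mulrC lambdaFZ // mulrC. Qed.

Hypotheses (j_gt0 : (0 < j)%N) (j_lt_m : (j < m)%N) (coprime_j : coprime j #|F|.-1).

Lemma perm_poly_necessary :
  is_perm_poly iota ('X * (h \Po lambda_poly F m j)) -> h.[0] != 0 /\ bijective g.
Proof.
rewrite /is_perm_poly => f_bij; split.
  have [x1 x1_neq0 x1_root] := exists_lambda_root_neq0 iota card_L j_gt0 j_lt_m.
  apply: contraNneq x1_neq0 => h0_eq0; apply/eqP/(bij_inj f_bij).
  by rewrite !horner_perm_poly x1_root lambdaF0 // h0_eq0 rmorph0 !mulr0.
apply: surjF_bij => c; have [x <-] := lambdaF_surj iota card_L j_gt0 j_lt_m coprime_j c.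
have [f_inv _ f_invK] := f_bij.
by exists (lambdaF iota m j (f_inv x)); rewrite -lambdaF_perm_poly f_invK.
Qed.

Lemma perm_poly_sufficient :
  h.[0] != 0 -> bijective g -> is_perm_poly iota ('X * (h \Po lambda_poly F m j)).
Proof.
move=> h0_neq0 /bij_inj g_inj.
have h_neq0 c : h.[c] != 0.
  have [-> //|c_neq0] := eqVneq c 0; apply: contraNneq c_neq0 => hc_eq0.
  by apply/eqP/g_inj; rewrite /= hc_eq0 expr0n eqn0Ngt j_gt0 mulr0 mul0r.
rewrite /is_perm_poly; apply: injF_bij => x y /[dup] /(congr1 (lambdaF iota m j)).
rewrite !lambdaF_perm_poly => /g_inj eq_xy.
by rewrite !horner_perm_poly eq_xy; apply: mulIf; rewrite fmorph_eq0.
Qed.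

End PermutationPolynomial.

Theorem theorem3p1 (F L : finFieldType) (iota : {rmorphism F -> L}) (m j : nat)
  (hL : #|L| = (#|F| ^ m)%N) (hm : (1 < m)%N) (hj1 : (1 <= j)%N) (hj2 : (j <= m - 1)%N)
  (hcop : coprime j (#|F|).-1) (h : {poly F}) :
  is_perm_poly iota ('X * (h \Po lambda_poly F m j))
  <-> (h.[0] != 0 /\ bijective (fun x : F => x * (h.[x]) ^+ j)).
Proof.
have j_lt_m : (j < m)%N by lia.
split; first exact: perm_poly_necessary.
by case; apply: perm_poly_sufficient.
Qed.
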